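(* Let $M$ be a non-trivial finitely generated indecomposable $\langle t\rangle$-module. Then its graph $\Gamma_M$ is of type 1, type 2, or type 3.
   Context: $\langle t\rangle=\{0,1,t,t^2,\dots\}$ is the free commutative monoid with zero on one generator. A $\langle t\rangle$-module is a pointed set $(M,* )$ with an action of $\langle t\rangle$ such that $1m=m$, $a(bm)=(ab)m$, $0m=*$; it is finitely generated if there are $m_1,\dots,m_k$ with every element of the form $t^jm_i$ or $*$; it is non-trivial if $M\ne\{*\}$; it is indecomposable if it is not isomorphic to a wedge sum $M'\oplus M''$ (disjoint union with basepoints identified) of two non-trivial modules. The graph $\Gamma_M$ is the directed graph with vertex set $M\setminus\{*\}$ and an edge $m\to tm$ for every $m\in M\setminus\{*\}$ with $tm\ne *$; each vertex has at most one outgoing edge. A leaf is a vertex with no incoming edge, a root a vertex with no outgoing edge. $\Gamma_M$ is of type 1 if it is a rooted tree: its underlying undirected graph is a tree with a unique root, and from every vertex there is a unique directed path to the root. It is of type 2 if it is obtained from a (finite) rooted tree by joining its root by an edge to the initial vertex of the infinite directed ray $v_0\to v_1\to v_2\to\cdots$ (the graph $\Gamma_{\langle t\rangle}$). It is of type 3 if it is obtained from an oriented directed cycle by attaching rooted trees to vertices of the cycle (each tree's root having an outgoing edge into the cycle). *)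

From Stdlib Require Import List Arith.
Import ListNotations.

(* The monoid <t> = {0,1,t,t^2,...}: None is 0, Some j is t^j. *)
Definition tmon := option nat.

Definition tmul (a b : tmon) : tmon :=
  match a, b with
  | Some i, Some j => Some (i + j)
  | _, _ => None
  end.

Record tmodule := TModule {
  car : Type;
  pt : car;
  act : tmon -> car -> car;
  act_one : forall m, act (Some 0) m = m;
  act_mul : forall a b m, act a (act b m) = act (tmul a b) m;
  act_zero : forall m, act None m = pt
}.

Definition tact (M : tmodule) (m : car M) : car M := act M (Some 1) m.

Definition nontrivial (M : tmodule) : Prop := exists m : car M, m <> pt M.

Definition finitely_generated (M : tmodule) : Prop :=
  exists gens : list (car M),
    forall m : car M, m = pt M \/
      exists g j, In g gens /\ m = act M (Some j) g.

Definition is_hom (M1 M2 : tmodule) (f : car M1 -> car M2) : Prop :=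
  f (pt M1) = pt M2 /\ forall a x, f (act M1 a x) = act M2 a (f x).

(* M is isomorphic to the wedge sum M1 (+) M2: the map M1 (+) M2 -> M
   induced by module maps f1, f2 is bijective (its inverse is then
   automatically a module map). *)
Definition iso_to_wedge (M1 M2 M : tmodule)
  (f1 : car M1 -> car M) (f2 : car M2 -> car M) : Prop :=
  is_hom M1 M f1 /\ is_hom M2 M f2 /\
  (forall x y, f1 x = f1 y -> x = y) /\
  (forall x y, f2 x = f2 y -> x = y) /\
  (forall x y, f1 x = f2 y -> x = pt M1 /\ y = pt M2) /\
  (forall m, (exists x, f1 x = m) \/ (exists y, f2 y = m)).

Definition indecomposable (M : tmodule) : Prop :=
  ~ exists (M1 M2 : tmodule) f1 f2,
      nontrivial M1 /\ nontrivial M2 /\ iso_to_wedge M1 M2 M f1 f2.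

(* Since each vertex has at most one outgoing edge, a directed
   path from v to w (w a vertex) is exactly an iterate: tʲ v = w. *)
Definition vertex (M : tmodule) (m : car M) : Prop := m <> pt M.

Definition edge (M : tmodule) (u w : car M) : Prop :=
  vertex M u /\ vertex M w /\ w = tact M u.

Definition titer (M : tmodule) (n : nat) (v : car M) : car M :=
  Nat.iter n (tact M) v.

Definition dpath (M : tmodule) (n : nat) (v w : car M) : Prop :=
  vertex M v /\ vertex M w /\ titer M n v = w.

(* Type 1: a rooted tree: a (unique) root r, reached by a directed path
   from every vertex. *)
Definition graph_type1 (M : tmodule) : Prop :=
  exists r, vertex M r /\ tact M r = pt M /\
    forall v, vertex M v -> exists n, dpath M n v r.

(* Type 2: a finite rooted tree (root r) whose root is joined by an edge to
   the start v0 of an infinite directed ray v0 -> v1 -> ... . *)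
Definition on_ray (M : tmodule) (v0 x : car M) : Prop :=
  exists i, titer M i v0 = x.

Definition graph_type2 (M : tmodule) : Prop :=
  exists r v0,
    vertex M r /\ edge M r v0 /\
    (forall i, vertex M (titer M i v0)) /\
    (forall i j, titer M i v0 = titer M j v0 -> i = j) /\
    (exists l : list (car M),
        forall v, vertex M v -> ~ on_ray M v0 v -> In v l) /\
    (forall v, vertex M v -> ~ on_ray M v0 v -> exists n, dpath M n v r).

(* Type 3: an oriented cycle c_0 -> c_1 -> ... -> c_{k-1} -> c_0 (k >= 1)
   with rooted trees attached: every vertex has a directed path into the
   cycle. *)
Definition graph_type3 (M : tmodule) : Prop :=
  exists c : list (car M),
    c <> [] /\ NoDup c /\
    (forall x, In x c -> vertex M x) /\
    (forall i, i < length c ->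
        tact M (nth i c (pt M)) = nth ((S i) mod length c) c (pt M)) /\
    (forall v, vertex M v -> exists n w, In w c /\ dpath M n v w).

From Stdlib Require Import List Arith Lia Wf_nat Classical ProofIrrelevance.

(* Indecomposability makes Gamma_M connected: a set of vertices which is
   stable under t in both directions, together with its complement, splits M
   as a wedge sum.  Hence any two vertices have a common nonzero iterate.
   If some vertex is periodic, its orbit is the cycle and every vertex flows
   into it (type 3).  If some vertex is eventually killed by t, its last
   nonzero iterate is a root reached from every vertex (type 1).  Otherwise
   t is injective on every orbit and never reaches the base point; if B
   bounds, over the finitely many generators g, the numbers of steps n, m with
   t^n g = t^m g0 for a fixed vertex g0, then every vertex outside the ray
   starting at t^(B+1) g0 is t^j g with j <= 2B and flows into t^B g0 (type 2). *)

Lemma titer_add (M : tmodule) a b x : titer M a (titer M b x) = titer M (a + b) x.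
Proof.
  unfold titer. induction a as [|a IH]; simpl; [reflexivity|]. rewrite IH; reflexivity.
Qed.

Lemma titer_Sr (M : tmodule) n x : titer M n (tact M x) = titer M (S n) x.
Proof.
  change (tact M x) with (titer M 1 x). rewrite titer_add. f_equal; lia.
Qed.

Lemma tact_pt (M : tmodule) : tact M (pt M) = pt M.
Proof.
  unfold tact. rewrite <- (act_zero M (pt M)), act_mul. reflexivity.
Qed.

Lemma titer_pt (M : tmodule) n : titer M n (pt M) = pt M.
Proof.
  induction n as [|n IH]; [reflexivity|].
  change (tact M (titer M n (pt M)) = pt M). rewrite IH; apply tact_pt.
Qed.

Lemma act_titer (M : tmodule) j x : act M (Some j) x = titer M j x.
Proof.
  induction j as [|j IH]; [apply act_one|].
  change (Some (S j)) with (tmul (Some 1) (Some j)).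
  rewrite <- act_mul, IH. reflexivity.
Qed.

Section TStableSubmodule.

Variables (M : tmodule) (P : car M -> Prop).
Hypothesis P_tact : forall x, vertex M x -> vertex M (tact M x) -> P x -> P (tact M x).

Lemma act_pt_or a x : x = pt M \/ P x -> act M a x = pt M \/ P (act M a x).
Proof.
  destruct a as [j|]; [|intros; left; apply act_zero].
  rewrite act_titer. induction j as [|j IH]; intro Hx; [exact Hx|].
  change (tact M (titer M j x) = pt M \/ P (tact M (titer M j x))).
  destruct (IH Hx) as [E|Pj]; [left; rewrite E; apply tact_pt|].
  destruct (classic (titer M j x = pt M)) as [E|Ej]; [left; rewrite E; apply tact_pt|].
  destruct (classic (tact M (titer M j x) = pt M)) as [E|Etj]; [left; exact E|].
  right; apply P_tact; assumption.
Qed.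

Lemma submod_eq (x y : {z : car M | z = pt M \/ P z}) : proj1_sig x = proj1_sig y -> x = y.
Proof. apply eq_sig_hprop; intros; apply proof_irrelevance. Qed.

Definition submod : tmodule.
Proof.
  refine (TModule {x : car M | x = pt M \/ P x}
    (exist _ (pt M) (or_introl eq_refl))
    (fun a x => exist _ (act M a (proj1_sig x)) (act_pt_or a (proj1_sig x) (proj2_sig x)))
    _ _ _); intros; apply submod_eq; simpl.
  - apply act_one.
  - apply act_mul.
  - apply act_zero.
Defined.

Definition submod_incl (x : car submod) : car M := proj1_sig x.

Lemma submod_incl_hom : is_hom submod M submod_incl.
Proof. split; reflexivity. Qed.

Lemma submod_nontrivial a : vertex M a -> P a -> nontrivial submod.
Proof.
  intros Ha Pa. exists (exist _ a (or_intror Pa)). intro E.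
  exact (Ha (f_equal submod_incl E)).
Qed.

End TStableSubmodule.

Arguments submod_incl {M P P_tact}.

Lemma wedge_of_tstable_partition (M : tmodule) (P : car M -> Prop)
  (HP : forall x, vertex M x -> vertex M (tact M x) -> P x -> P (tact M x))
  (HnP : forall x, vertex M x -> vertex M (tact M x) -> ~ P x -> ~ P (tact M x)) :
  iso_to_wedge (submod M P HP) (submod M _ HnP) M submod_incl submod_incl.
Proof.
  split; [apply submod_incl_hom|]. split; [apply submod_incl_hom|].
  split; [apply submod_eq|]. split; [apply submod_eq|]. split.
  - intros [x px] [y py] E. unfold submod_incl in E; simpl in E. subst y.
    destruct px as [E|Px]; [split; apply submod_eq; exact E|].
    destruct py as [E|nPx]; [split; apply submod_eq; exact E|contradiction].
  - intro m. destruct (classic (P m)) as [Pm|nPm].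
    + left. exists (exist _ m (or_intror Pm)). reflexivity.
    + right. exists (exist _ m (or_intror nPm)). reflexivity.
Qed.

Lemma indecomposable_tstable (M : tmodule) (P : car M -> Prop) :
  indecomposable M ->
  (forall x, vertex M x -> vertex M (tact M x) -> (P x <-> P (tact M x))) ->
  forall a b, vertex M a -> vertex M b -> P a -> P b.
Proof.
  intros Hind Hinv a b Ha Hb Pa. apply NNPP; intro nPb. apply Hind.
  assert (HP : forall x, vertex M x -> vertex M (tact M x) -> P x -> P (tact M x))
    by (intros x Hx Htx; apply Hinv; assumption).
  assert (HnP : forall x, vertex M x -> vertex M (tact M x) -> ~ P x -> ~ P (tact M x))
    by (intros x Hx Htx nPx Ptx; apply nPx, (Hinv x Hx Htx), Ptx).
  exists (submod M P HP), (submod M _ HnP), submod_incl, submod_incl.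
  split; [exact (submod_nontrivial M P HP a Ha Pa)|].
  split; [exact (submod_nontrivial M _ HnP b Hb nPb)|].
  apply wedge_of_tstable_partition.
Qed.

Lemma indecomposable_common_iterate (M : tmodule) v w :
  indecomposable M -> vertex M v -> vertex M w ->
  exists n m, titer M n w = titer M m v /\ vertex M (titer M n w).
Proof.
  intros Hind Hv Hw.
  apply (indecomposable_tstable M
    (fun x => exists n m, titer M n x = titer M m v /\ vertex M (titer M n x)) Hind)
    with (a := v); [| assumption | assumption | exists 0, 0; split; [reflexivity|exact Hv]].
  intros x Hx Htx. split.
  - intros [[|n] [m [E En]]].
    + exists 0, (S m). split; [simpl; rewrite <- E; reflexivity|exact Htx].
    + exists n, m. rewrite titer_Sr. auto.
  - intros [n [m [E En]]]. exists (S n), m. rewrite <- titer_Sr. auto.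
Qed.

Lemma list_bounded_witnesses (T : Type) (Q : T -> Prop) (R : T -> nat -> nat -> Prop)
  (l : list T) :
  (forall g, In g l -> Q g -> exists n m, R g n m) ->
  exists B, forall g, In g l -> Q g -> exists n m, n <= B /\ m <= B /\ R g n m.
Proof.
  induction l as [|a l IH]; intros H; [exists 0; intros g []|].
  destruct IH as [B HB]; [intros g Hg; apply H; right; exact Hg|].
  destruct (classic (Q a)) as [Qa|nQa].
  - destruct (H a (or_introl eq_refl) Qa) as [n0 [m0 R0]].
    exists (max B (max n0 m0)). intros g [<-|Hg] Hq.
    + exists n0, m0. repeat split; [lia|lia|exact R0].
    + destruct (HB g Hg Hq) as [n [m [? [? ?]]]]. exists n, m. repeat split; [lia|lia|auto].
  - exists B. intros g [<-|Hg] Hq; [contradiction|]. apply HB; assumption.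
Qed.

Section PeriodicVertex.

Variables (M : tmodule) (v : car M) (K : nat).
Hypothesis v_vertex : vertex M v.
Hypothesis K_pos : 0 < K.
Hypothesis titer_period : titer M K v = v.
Hypothesis period_min : forall j, 0 < j -> titer M j v = v -> K <= j.

Definition cycle_of : list (car M) := map (fun i => titer M i v) (seq 0 K).

Lemma length_cycle_of : length cycle_of = K.
Proof. unfold cycle_of. rewrite length_map, length_seq. reflexivity. Qed.

Lemma nth_cycle_of i d : i < K -> nth i cycle_of d = titer M i v.
Proof.
  intros Hi. unfold cycle_of.
  rewrite (nth_indep _ d (titer M 0 v)) by (rewrite length_map, length_seq; lia).
  rewrite (map_nth (fun i => titer M i v)), seq_nth by lia. reflexivity.
Qed.

Lemma titer_mod_period a : titer M a v = titer M (a mod K) v.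
Proof.
  assert (Hq : forall q, titer M (K * q) v = v).
  { induction q as [|q IHq]; [rewrite Nat.mul_0_r; reflexivity|].
    replace (K * S q) with (K + K * q) by lia. rewrite <- titer_add, IHq. exact titer_period. }
  rewrite (Nat.div_mod a K) at 1 by lia.
  rewrite Nat.add_comm, <- titer_add, Hq. reflexivity.
Qed.

Lemma in_cycle_of a : In (titer M a v) cycle_of.
Proof.
  rewrite titer_mod_period. apply in_map_iff. exists (a mod K). split; [reflexivity|].
  apply in_seq. pose proof (Nat.mod_upper_bound a K). lia.
Qed.

Lemma cycle_of_vertex x : In x cycle_of -> vertex M x.
Proof.
  intros Hx. apply in_map_iff in Hx. destruct Hx as [i [<- Hi]]. apply in_seq in Hi.
  intro E. apply v_vertex. rewrite <- titer_period.
  replace K with (K - i + i) by lia. rewrite <- titer_add, E. apply titer_pt.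
Qed.

Lemma titer_period_inj i j : i < K -> j < K -> titer M i v = titer M j v -> i = j.
Proof.
  assert (Hlt : forall i j, i < j < K -> titer M i v <> titer M j v).
  { intros i' j' Hij E. assert (K <= K - j' + i') by
      (apply period_min; [lia|rewrite <- titer_add, E, titer_add;
        replace (K - j' + j') with K by lia; exact titer_period]). lia. }
  intros Hi Hj E. destruct (Nat.lt_total i j) as [h|[h|h]]; [|exact h|];
    exfalso; [apply (Hlt i j)|apply (Hlt j i)]; auto.
Qed.

Lemma type3_of_minimal_period : indecomposable M -> graph_type3 M.
Proof.
  intros Hind. exists cycle_of. split; [|split; [|split; [|split]]].
  - unfold cycle_of. destruct K; [lia|discriminate].
  - apply NoDup_map_NoDup_ForallPairs; [|apply seq_NoDup].
    intros a b Ha Hb. apply in_seq in Ha, Hb. apply titer_period_inj; lia.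
  - exact cycle_of_vertex.
  - intros i Hi. rewrite length_cycle_of in Hi |- *.
    rewrite nth_cycle_of, nth_cycle_of by (try apply Nat.mod_upper_bound; lia).
    exact (titer_mod_period (S i)).
  - intros w Hw. destruct (indecomposable_common_iterate M v w Hind v_vertex Hw)
      as [n [m [E En]]].
    exists n, (titer M m v). split; [apply in_cycle_of|].
    split; [exact Hw|split; [rewrite <- E; exact En|exact E]].
Qed.

End PeriodicVertex.

Lemma type3_of_periodic_vertex (M : tmodule) v k :
  indecomposable M -> vertex M v -> 0 < k -> titer M k v = v -> graph_type3 M.
Proof.
  intros Hind Hv Hk Hkv.
  destruct (dec_inh_nat_subset_has_unique_least_element
              (fun j => 0 < j /\ titer M j v = v)) as [K [[[HK HKv] Hmin] _]].
  - intro j; apply classic.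
  - exists k; auto.
  - apply (type3_of_minimal_period M v K); auto.
Qed.

Lemma exists_root_of_mortal (M : tmodule) n v :
  vertex M v -> titer M n v = pt M -> exists r, vertex M r /\ tact M r = pt M.
Proof.
  revert v; induction n as [|n IH]; intros v Hv Hn; [exact (False_ind _ (Hv Hn))|].
  destruct (classic (tact M v = pt M)) as [E|E]; [exists v; auto|].
  apply (IH (tact M v) E). rewrite titer_Sr; exact Hn.
Qed.

Lemma type1_of_mortal_vertex (M : tmodule) v n :
  indecomposable M -> vertex M v -> titer M n v = pt M -> graph_type1 M.
Proof.
  intros Hind Hv Hn. destruct (exists_root_of_mortal M n v Hv Hn) as [r [Hr Htr]].
  exists r. split; [exact Hr|split; [exact Htr|]].
  intros w Hw. destruct (indecomposable_common_iterate M r w Hind Hr Hw) as [a [b [E Ea]]].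
  destruct b as [|b].
  - exists a. repeat split; assumption.
  - exfalso. apply Ea. rewrite E, <- titer_Sr, Htr. apply titer_pt.
Qed.

Section ImmortalAperiodic.

Variable M : tmodule.
Hypothesis titer_vertex : forall v n, vertex M v -> vertex M (titer M n v).
Hypothesis no_periodic : forall v k, vertex M v -> 0 < k -> titer M k v <> v.
Variables (gens : list (car M)) (g0 : car M).
Hypothesis gens_span :
  forall m, m = pt M \/ exists g j, In g gens /\ m = act M (Some j) g.
Hypothesis g0_vertex : vertex M g0.

Lemma titer_inj v a b : vertex M v -> titer M a v = titer M b v -> a = b.
Proof.
  intros Hv. assert (Hlt : forall a b, a < b -> titer M a v <> titer M b v).
  { intros a' b' Hab E. apply (no_periodic (titer M a' v) (b' - a'));
      [apply titer_vertex; exact Hv|lia|].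
    rewrite titer_add. replace (b' - a' + a') with b' by lia. symmetry; exact E. }
  intros E. destruct (Nat.lt_total a b) as [h|[h|h]]; [|exact h|];
    exfalso; [apply (Hlt a b)|apply (Hlt b a)]; auto.
Qed.

Lemma vertex_titer_gen w :
  vertex M w -> exists g j, In g gens /\ vertex M g /\ w = titer M j g.
Proof.
  intros Hw. destruct (gens_span w) as [E|[g [j [Hg E]]]]; [contradiction|].
  rewrite act_titer in E. exists g, j. split; [exact Hg|split; [|exact E]].
  intro Eg. apply Hw. rewrite E, Eg. apply titer_pt.
Qed.

Section Bound.

Variable B : nat.
Hypothesis gens_meet_g0 : forall g, In g gens -> vertex M g ->
  exists n m, n <= B /\ m <= B /\ titer M n g = titer M m g0.

Lemma off_ray_below_root w :
  vertex M w -> ~ on_ray M (titer M (S B) g0) w ->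
  exists g j d, In g gens /\ j <= B + B /\ w = titer M j g /\
    titer M d w = titer M B g0.
Proof.
  intros Hw Hoff. destruct (vertex_titer_gen w Hw) as [g [j [Hg [Hgv ->]]]].
  destruct (gens_meet_g0 g Hg Hgv) as [n [m [Hn [Hm E]]]].
  exists g, j. destruct (Nat.le_gt_cases j n).
  - exists (n - j + (B - m)). repeat split; [exact Hg|lia|].
    rewrite titer_add. replace (n - j + (B - m) + j) with (B - m + n) by lia.
    rewrite <- titer_add, E, titer_add. f_equal; lia.
  - assert (Ej : titer M j g = titer M (j - n + m) g0).
    { rewrite <- titer_add, <- E, titer_add. f_equal; lia. }
    destruct (Nat.le_gt_cases (j - n + m) B).
    + exists (B - (j - n + m)). repeat split; [exact Hg|lia|].
      rewrite Ej, titer_add. f_equal; lia.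
    + exfalso. apply Hoff. exists (j - n + m - S B). rewrite titer_add, Ej. f_equal; lia.
Qed.

Lemma type2_of_bound : graph_type2 M.
Proof.
  exists (titer M B g0), (titer M (S B) g0).
  split; [apply titer_vertex, g0_vertex|].
  split; [repeat split; try apply titer_vertex, g0_vertex|].
  split; [intro i; rewrite titer_add; apply titer_vertex, g0_vertex|].
  split; [intros i j E; rewrite !titer_add in E; apply titer_inj in E; [lia|exact g0_vertex]|].
  split.
  - exists (flat_map (fun g => map (fun j => titer M j g) (seq 0 (S (B + B)))) gens).
    intros w Hw Hoff. destruct (off_ray_below_root w Hw Hoff) as [g [j [d [Hg [Hj [-> _]]]]]].
    apply in_flat_map. exists g. split; [exact Hg|].
    apply in_map_iff. exists j. split; [reflexivity|apply in_seq; lia].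
  - intros w Hw Hoff. destruct (off_ray_below_root w Hw Hoff) as [g [j [d [_ [_ [_ Hd]]]]]].
    exists d. split; [exact Hw|split; [apply titer_vertex, g0_vertex|exact Hd]].
Qed.

End Bound.

Lemma type2_of_generators : indecomposable M -> graph_type2 M.
Proof.
  intros Hind.
  destruct (list_bounded_witnesses _ (vertex M)
              (fun g n m => titer M n g = titer M m g0) gens) as [B HB].
  - intros g _ Hg. destruct (indecomposable_common_iterate M g0 g Hind g0_vertex Hg)
      as [n [m [E _]]]. eauto.
  - exact (type2_of_bound B HB).
Qed.

End ImmortalAperiodic.

Theorem mainTheorem9 (M : tmodule) :
  nontrivial M -> finitely_generated M -> indecomposable M ->
  graph_type1 M \/ graph_type2 M \/ graph_type3 M.
Proof.
  intros [g0 Hg0] [gens Hgens] Hind.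
  destruct (classic (exists v k, vertex M v /\ 0 < k /\ titer M k v = v))
    as [[v [k [Hv [Hk Hper]]]] | Haper].
  { right; right. exact (type3_of_periodic_vertex M v k Hind Hv Hk Hper). }
  destruct (classic (exists v n, vertex M v /\ titer M n v = pt M))
    as [[v [n [Hv Hn]]] | Himm].
  { left. exact (type1_of_mortal_vertex M v n Hind Hv Hn). }
  right; left. apply (type2_of_generators M) with gens g0; auto.
  - intros v n Hv E. apply Himm. eauto.
  - intros v k Hv Hk E. apply Haper. eauto.
Qed.
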